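(* If $A\subset\mathbb{Z}^n$ is a generic $\Lambda$-finite set for some antichain lattice $\Lambda\subset\mathbb{Z}^n$, then the Scarf complex $N(A)$ is isomorphic to the hull complex $\mathrm{hull}(A)$ (via $\sigma\mapsto E_t(\sigma)$ for $t$ sufficiently large).
   Context: Notation: $\le$, $\ll$, $\vee$ componentwise on $\mathbb{Z}^n$; an antichain lattice is a subgroup of $\mathbb{Z}^n$ whose distinct elements are pairwise incomparable. $T_\eta=\eta-\mathbb{N}^n$, $T^o_\eta=\{\beta:\beta\ll\eta\}$; the $X$-face ($\emptyset\neq X\subseteq[n]$) of $T_\eta$ is $\{\alpha\in T_\eta:\alpha_i=\eta_i\ \forall i\in X\}$. $A$ is generic if whenever $T^o_\eta\cap A=\emptyset$, each face of $T_\eta$ contains at most one point of $A$. $A$ is $\Lambda$-finite if $A=A+\Lambda$ and $A=A_0+\Lambda$ for some finite $A_0$. $N(A)$ is the simplicial complex of strongly neighborly subsets of $A$: finite nonempty $B\subseteq A$ such that $B'\subseteq A$, $\vee B'=\vee B$ imply $B'=B$. For $t>1$, $E_t(\alpha)=(t^{\alpha_1},\dots,t^{\alpha_n})$, $\mathcal{P}_t(A)=\mathbb{R}^n_{\ge0}+\mathrm{conv}(E_t(A))$, $\mathrm{hull}_t(A)$ is the collection of $F\subseteq A$ such that $\mathrm{conv}(E_t(F))$ is a face of $\mathcal{P}_t(A)$, and $\mathrm{hull}(A)$ is $\mathrm{hull}_t(A)$ for $t$ large enough that it no longer depends on $t$. *)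

From HB Require Import structures.
From mathcomp Require Import all_boot all_order all_algebra.
From mathcomp Require Import finmap.
From mathcomp Require Import reals.
Set Implicit Arguments. Unset Strict Implicit. Unset Printing Implicit Defensive.
Import Order.TTheory GRing.Theory Num.Theory.
Local Open Scope ring_scope.


Notation Zn n := {ffun 'I_n -> int}.
Notation Rn R n := {ffun 'I_n -> R}.

Definition leZ n (a b : Zn n) : Prop := forall i, a i <= b i.
Definition llZ n (a b : Zn n) : Prop := forall i, a i < b i.

Definition vee n (B : {fset Zn n}) : Zn n :=
  [ffun i => foldr (fun (b : Zn n) (m : int) => Num.max (b i) m)
                   ((head ([ffun => 0] : Zn n) (enum_fset B)) i) (enum_fset B)].

Definition subgroupZ n (L : Zn n -> Prop) : Prop :=
  L 0 /\ (forall x y, L x -> L y -> L (x - y)).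
Definition antichain_lattice n (L : Zn n -> Prop) : Prop :=
  subgroupZ L /\
  (forall x y, L x -> L y -> x <> y -> ~ leZ x y /\ ~ leZ y x).

Definition Lambda_finite n (L A : Zn n -> Prop) : Prop :=
  (forall x, A x <-> exists a l, A a /\ L l /\ x = a + l) /\
  (exists A0 : {fset Zn n},
      forall x, A x <-> exists a l, a \in A0 /\ L l /\ x = a + l).

Definition Tcone n (eta : Zn n) (a : Zn n) : Prop := leZ a eta.
Definition Tcone_open n (eta : Zn n) (b : Zn n) : Prop := llZ b eta.
Definition Tface n (eta : Zn n) (X : {set 'I_n}) (a : Zn n) : Prop :=
  Tcone eta a /\ (forall i, i \in X -> a i = eta i).

Definition generic n (A : Zn n -> Prop) : Prop :=
  forall eta : Zn n,
    (forall b, Tcone_open eta b -> ~ A b) ->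
    forall X : {set 'I_n}, X != set0 ->
      forall a b, A a -> A b -> Tface eta X a -> Tface eta X b -> a = b.

(* Scarf complex N(A): strongly neighborly finite nonempty subsets of A *)
Definition in_scarf n (A : Zn n -> Prop) (B : {fset Zn n}) : Prop :=
  B != fset0 /\ (forall b, b \in B -> A b) /\
  (forall B' : {fset Zn n}, B' != fset0 -> (forall b, b \in B' -> A b) ->
      vee B' = vee B -> B' = B).

Definition Et (R : realType) n (t : R) (a : Zn n) : Rn R n :=
  [ffun i => t ^ (a i)].

Definition convEt (R : realType) n (t : R) (F : {fset Zn n}) (x : Rn R n) : Prop :=
  exists w : Zn n -> R,
    (forall a, a \in F -> 0 <= w a) /\
    \sum_(a <- enum_fset F) w a = 1 /\
    (forall i, x i = \sum_(a <- enum_fset F) w a * Et t a i).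

(* P_t(A) = R^n_{>=0} + conv(E_t(A)); the convex hull of an arbitrary set
   is the union of the convex hulls of its finite subsets. *)
Definition Pt (R : realType) n (t : R) (A : Zn n -> Prop) (x : Rn R n) : Prop :=
  exists (F : {fset Zn n}) (y : Rn R n),
    (forall a, a \in F -> A a) /\ convEt t F y /\ (forall i, y i <= x i).

Definition is_face (R : realType) n (C G : Rn R n -> Prop) : Prop :=
  (forall x, G x -> C x) /\
  (forall x y (s : R), G x -> G y -> 0 <= s <= 1 ->
      G [ffun i => (1 - s) * x i + s * y i]) /\
  (forall x y (s : R), C x -> C y -> 0 < s < 1 ->
      G [ffun i => (1 - s) * x i + s * y i] -> G x /\ G y).

Definition in_hull (R : realType) n (t : R) (A : Zn n -> Prop) (F : {fset Zn n}) : Prop :=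
  F != fset0 /\ (forall a, a \in F -> A a) /\ is_face (Pt t A) (convEt t F).

(* Everything is read off the join [eta = vee F] of a finite [F] in [A], through the
   condition that no point of [A] lies strictly below [eta].

   If conv E_t(F) is a face of P_t(A) and t > n, choose [p i] in [F] with [p i i = eta i].
   The barycentre of the [p i] lies in that face and strictly above E_t(b) for any [b] in
   [A] with [b << eta]; a face of an upward-closed set that is bounded in one coordinate
   cannot contain such a point.  So no such [b] exists, and genericity then forces every
   nonempty [B] in [A] with [vee B = eta] to be [F].

   Conversely, if [F] is strongly neighborly, genericity makes the [p i] unique, and for
   t >= 4n a diagonally dominant linear system gives weights [lam_l > 0] with
   [\sum_l lam_l t^(a_l - eta_l) = 1] on [F] and [lam_l t > 1].  Any other [b] in [A]
   exceeds [eta] in some coordinate [j], so its value is at least [lam_j t > 1]: the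
   functional [x |-> \sum_l lam_l t^(- eta_l) x_l] exposes conv E_t(F) as a face. *)

From HB Require Import structures.
From mathcomp Require Import all_boot all_order all_algebra.
From mathcomp Require Import finmap.
From mathcomp Require Import reals.
From mathcomp Require Import zify ring lra.
Import Order.TTheory GRing.Theory Num.Theory.
Local Open Scope ring_scope.

Set Implicit Arguments. Unset Strict Implicit. Unset Printing Implicit Defensive.

Section Join.
Variable n : nat.

Lemma foldr_max_ge (s : seq (Zn n)) (v : int) i :
  v <= foldr (fun (b : Zn n) (m : int) => Num.max (b i) m) v s /\
  (forall b, b \in s -> b i <= foldr (fun (b : Zn n) (m : int) => Num.max (b i) m) v s).
Proof.
elim: s => [|c s [IH1 IH2]] /=; first by split.
split; first by rewrite le_max IH1 orbT.
move=> b; rewrite in_cons => /orP [/eqP -> | bs]; first by rewrite le_max lexx.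
by rewrite le_max IH2 ?orbT.
Qed.

Lemma foldr_max_mem (s : seq (Zn n)) (v : int) i :
  foldr (fun (b : Zn n) (m : int) => Num.max (b i) m) v s = v \/
  exists2 b, b \in s & foldr (fun (b : Zn n) (m : int) => Num.max (b i) m) v s = b i.
Proof.
elim: s => [|c s IH] /=; first by left.
have [_|_] := leP (c i) (foldr (fun (b : Zn n) (m : int) => Num.max (b i) m) v s).
- case: IH => [->|[b bs ->]]; first by left.
  by right; exists b => //; rewrite in_cons bs orbT.
- by right; exists c; rewrite ?mem_head.
Qed.

Lemma vee_ge (B : {fset Zn n}) b : b \in B -> leZ b (vee B).
Proof.
move=> bB i; rewrite /vee ffunE.
by have [_ ->] := foldr_max_ge (enum_fset B) (head [ffun => 0] (enum_fset B) i) i.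
Qed.

Lemma vee_attained (B : {fset Zn n}) i : B != fset0 -> exists2 b, b \in B & b i = vee B i.
Proof.
case/fset0Pn=> x xB; rewrite /vee ffunE.
have hB : head [ffun => 0] (enum_fset B) \in B.
  move: xB; rewrite -[x \in B]/(x \in enum_fset B).
  by case E: (enum_fset B) => [|c s] //= _; rewrite -[c \in B]/(c \in enum_fset B) E mem_head.
by case: (foldr_max_mem (enum_fset B) (head [ffun => 0] (enum_fset B) i) i)
  => [->|[b bs ->]]; [exists (head [ffun => 0] (enum_fset B)) | exists b].
Qed.

Lemma vee_unique (B : {fset Zn n}) (eta : Zn n) : B != fset0 ->
  (forall b, b \in B -> leZ b eta) -> (forall i, exists2 b, b \in B & b i = eta i) ->
  vee B = eta.
Proof.
move=> B0 le_eta att; apply/ffunP => i; apply/le_anti/andP; split.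
- by have [b bB <-] := vee_attained i B0; exact: le_eta.
- by have [b bB <-] := att i; exact: vee_ge.
Qed.

Lemma vee_witness (B : {fset Zn n}) : B != fset0 ->
  exists p : 'I_n -> Zn n, (forall i, p i \in B) /\ (forall i, p i i = vee B i).
Proof.
move=> B0; have ex i : exists b, (b \in B) && (b i == vee B i).
  by have [b bB bi] := vee_attained i B0; exists b; rewrite bB bi eqxx.
by exists (fun i => xchoose (ex i)); split=> i; case/andP: (xchooseP (ex i)) => // _ /eqP.
Qed.
End Join.

Section Polyhedron.
Variables (R : realType) (n : nat) (t : R).
Implicit Types (A : Zn n -> Prop) (F G : {fset Zn n}) (x y : Rn R n).

Lemma convEt_Pt A F x : (forall a, a \in F -> A a) -> convEt t F x -> Pt t A x.
Proof. by move=> FA Fx; exists F, x. Qed.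

Lemma Pt_Et A b : A b -> Pt t A (Et t b).
Proof.
move=> Ab; exists [fset b]%fset, (Et t b); split; first by move=> c /fset1P ->.
split=> //; exists (fun=> 1); split=> //; split=> [|l]; first by rewrite big_seq_fset1.
by rewrite big_seq_fset1 mul1r.
Qed.

Lemma Pt_upclosed A x y : Pt t A x -> (forall l, x l <= y l) -> Pt t A y.
Proof.
case=> G [z [GA [Gz zx]]] xy; exists G, z; split=> //; split=> // l.
exact: le_trans (zx l) (xy l).
Qed.

Lemma convEt_convex F x y s : convEt t F x -> convEt t F y -> 0 <= s <= 1 ->
  convEt t F [ffun i => (1 - s) * x i + s * y i].
Proof.
move=> [mx [mx0 [mx1 hx]]] [my [my0 [my1 hy]]] /andP [s0 s1].
exists (fun a => (1 - s) * mx a + s * my a); split; [|split].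
- by move=> a aF; rewrite addr_ge0 // mulr_ge0 ?mx0 ?my0 // subr_ge0.
- by rewrite big_split /= -!mulr_sumr mx1 my1; ring.
- move=> i; rewrite ffunE hx hy !mulr_sumr -big_split /=; apply: eq_bigr => a _; ring.
Qed.

Lemma convEt_le_sum F x i : 0 < t -> convEt t F x -> x i <= \sum_(c <- enum_fset F) Et t c i.
Proof.
move=> t0 [mu [mu0 [mu1 ->]]]; rewrite big_seq [X in _ <= X]big_seq.
apply: ler_sum => c cF; rewrite ler_piMl ?ffunE ?exprz_ge0 ?mu0 ?(ltW t0) // -mu1.
rewrite (bigD1_seq c) ?fset_uniq //= lerDl big_seq_cond.
by apply: sumr_ge0 => a /andP [aF _]; exact: mu0.
Qed.

Lemma convEt_sub F G (mu : Zn n -> R) x :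
  (forall a, a \in G -> 0 <= mu a) -> \sum_(a <- enum_fset G) mu a = 1 ->
  (forall a, a \in G -> a \notin F -> mu a = 0) ->
  (forall i, x i = \sum_(a <- enum_fset G) mu a * Et t a i) -> convEt t F x.
Proof.
move=> mu0 mu1 muF hx; pose nu a := if a \in G then mu a else 0.
have move_to_F (g : Zn n -> R) :
    \sum_(a <- enum_fset G) mu a * g a = \sum_(a <- enum_fset F) nu a * g a.
  rewrite big_seq (eq_bigr (fun a => nu a * g a)) => [|a aG]; last by rewrite /nu aG.
  rewrite -big_seq (big_fset_incl _ (fsubsetUr F G)) ?(big_fset_incl _ (fsubsetUl F G)) //.
  - move=> a; rewrite in_fsetU => /orP [->//|aG] aF.
    by rewrite /nu aG muF ?mul0r.
  - by move=> a _ aG; rewrite /nu (negbTE aG) mul0r.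
exists nu; split; [|split].
- by move=> a _; rewrite /nu; case: ifP => // /mu0.
- have := move_to_F (fun=> 1).
  under eq_bigr do rewrite mulr1; under [X in _ = X -> _]eq_bigr do rewrite mulr1.
  by rewrite mu1 => <-.
- by move=> i; rewrite hx move_to_F.
Qed.
End Polyhedron.

Lemma face_bounded_eq (R : realType) n (P G : Rn R n -> Prop) (i : 'I_n) (K : R)
    (y z : Rn R n) :
  is_face P G -> (forall x, G x -> x i <= K) ->
  (forall x x' : Rn R n, P x -> (forall l, x l <= x' l) -> P x') ->
  G y -> P z -> (forall l, z l <= y l) -> z i = y i.
Proof.
move=> [GP [_ ext]] bnd up Gy Pz zy; apply/le_anti; rewrite zy /= leNgt.
apply/negP => zi.
(* Pushing [y] away from [z] gives a point [x2] of [P] beyond the bound [K]; as [y] lies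
   strictly between [z] and [x2], the face would contain [x2]. *)
pose c := (K + 1 - y i) / (y i - z i).
have d0 : 0 < y i - z i by rewrite subr_gt0.
have yK := bnd _ Gy.
have c0 : 0 < c by rewrite /c divr_gt0 // subr_gt0; lra.
pose x2 : Rn R n := [ffun l => y l + c * (y l - z l)].
have Px2 : P x2 by apply: up (GP _ Gy) _ => l; rewrite ffunE lerDl mulr_ge0 ?subr_ge0 // ltW.
pose s := (1 + c)^-1.
have s01 : 0 < s < 1 by rewrite invr_gt0 invf_lt1; lra.
have y_between : [ffun l => (1 - s) * z l + s * x2 l] = y.
  apply/ffunP => l; rewrite !ffunE /s; field; rewrite gt_eqF //; lra.
have := ext z x2 s Pz Px2 s01; rewrite y_between => /(_ Gy) [_ /bnd].
rewrite /x2 ffunE /c divfK ?gt_eqF //; lra.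
Qed.

Section ExposedFace.
Variables (R : realType) (n : nat) (t : R) (A : Zn n -> Prop) (F : {fset Zn n}).
Variable w : 'I_n -> R.
Implicit Types (G : {fset Zn n}) (x y : Rn R n).
Hypotheses (w_gt0 : forall l, 0 < w l) (FA : forall a, a \in F -> A a)
  (w_F : forall a, a \in F -> \sum_l w l * Et t a l = 1)
  (w_notF : forall b, A b -> b \notin F -> 1 < \sum_l w l * Et t b l).

Let lin (x : Rn R n) := \sum_l w l * x l.

Lemma lin_Et_ge1 a : A a -> 1 <= lin (Et t a).
Proof. by move=> Aa; case: (boolP (a \in F)) => aF; [rewrite /lin w_F | exact/ltW/w_notF]. Qed.

Lemma lin_comb G (mu : Zn n -> R) x :
  (forall i, x i = \sum_(a <- enum_fset G) mu a * Et t a i) ->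
  lin x = \sum_(a <- enum_fset G) mu a * lin (Et t a).
Proof.
move=> hx; rewrite /lin; under eq_bigr => l _ do rewrite hx mulr_sumr.
rewrite exchange_big /=; apply: eq_bigr => a _; rewrite mulr_sumr.
by apply: eq_bigr => l _; rewrite mulrCA.
Qed.

Lemma lin_comb_ge1 G (mu : Zn n -> R) : (forall a, a \in G -> A a) ->
  (forall a, a \in G -> 0 <= mu a) -> \sum_(a <- enum_fset G) mu a = 1 ->
  1 <= \sum_(a <- enum_fset G) mu a * lin (Et t a).
Proof.
move=> GA mu0 <-; rewrite big_seq [X in _ <= X]big_seq; apply: ler_sum => a aG.
by apply: ler_peMr; [exact: mu0 | exact/lin_Et_ge1/GA].
Qed.

Lemma lin_Pt_ge1 x : Pt t A x -> 1 <= lin x.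
Proof.
case=> G [y [GA [[mu [mu0 [mu1 hy]]] yx]]].
apply: le_trans (lin_comb_ge1 GA mu0 mu1) _; rewrite -(lin_comb hy).
by apply: ler_sum => l _; apply: ler_wpM2l; [exact: ltW | exact: yx].
Qed.

Lemma lin_convEt x : convEt t F x -> lin x = 1.
Proof.
case=> mu [_ [mu1 hx]]; rewrite (lin_comb hx) -mu1 !big_seq.
by apply: eq_bigr => a aF; rewrite /lin w_F ?mulr1.
Qed.

Lemma lin_le_eq x y : (forall l, y l <= x l) -> lin x <= lin y -> x = y.
Proof.
move=> yx xy; have diff0 : \sum_l w l * (x l - y l) = 0.
  under eq_bigr do rewrite mulrBr.
  by rewrite sumrB; apply/eqP; rewrite subr_eq0 eq_le xy ler_sum // => l _;
    apply: ler_wpM2l; [exact: ltW | exact: yx].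
have nonneg l : true -> 0 <= w l * (x l - y l) by rewrite mulr_ge0 ?subr_ge0 ?yx ?ltW.
apply/ffunP => l; apply/eqP; rewrite -subr_eq0.
have /eqP := psumr_eq0P nonneg diff0 (i := l) isT.
by rewrite mulf_eq0 gt_eqF.
Qed.

Lemma Pt_lin1_convEt x : Pt t A x -> lin x = 1 -> convEt t F x.
Proof.
case=> G [y [GA [[mu [mu0 [mu1 hy]]] yx]]] x1.
have y1 := lin_comb_ge1 GA mu0 mu1; rewrite -(lin_comb hy) in y1.
have xy : x = y by apply: lin_le_eq; rewrite // x1.
rewrite xy; apply: (convEt_sub mu0 mu1 _ hy) => a aG aF.
have excess0 : \sum_(a <- enum_fset G | a \in G) mu a * (lin (Et t a) - 1) == 0.
  rewrite -big_seq; under eq_bigr do rewrite mulrBr mulr1.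
  by rewrite sumrB mu1 -(lin_comb hy) -xy x1 subrr.
rewrite psumr_eq0 in excess0; last first.
  by move=> b bG; apply: mulr_ge0; [exact: mu0 | rewrite subr_ge0; exact/lin_Et_ge1/GA].
have gt1 : 1 < lin (Et t a) by apply: w_notF => //; exact: GA.
by move/allP/(_ a aG): excess0; rewrite aG mulf_eq0 subr_eq0 (gt_eqF gt1) orbF => /eqP.
Qed.

Lemma lin_comb2 x y s :
  lin [ffun i => (1 - s) * x i + s * y i] = (1 - s) * lin x + s * lin y.
Proof. by rewrite /lin !mulr_sumr -big_split /=; apply: eq_bigr => l _; rewrite ffunE; ring. Qed.

Lemma exposed_face : is_face (Pt t A) (convEt t F).
Proof.
split; [by move=> x; apply: convEt_Pt | split; first by move=> *; apply: convEt_convex].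
move=> x y s Px Py /andP [s0 s1] /lin_convEt; rewrite lin_comb2 => mid1.
have x1 := lin_Pt_ge1 Px; have y1 := lin_Pt_ge1 Py.
have s1' : 0 < 1 - s by rewrite subr_gt0.
have lx1 : lin x = 1.
  apply/le_anti; rewrite x1 andbT -subr_le0 -(pmulr_rle0 _ s1'); nra.
have ly1 : lin y = 1.
  apply/le_anti; rewrite y1 andbT -subr_le0 -(pmulr_rle0 _ s0); nra.
by split; apply: Pt_lin1_convEt.
Qed.
End ExposedFace.

Lemma sum_seq_indicator (R : numDomainType) (T : eqType) (s : seq T) j :
  uniq s -> j \in s -> \sum_(x <- s) ((j == x)%:R : R) = 1.
Proof.
move=> us js; rewrite (bigD1_seq j) //= eqxx big1 ?addr0 // => x.
by rewrite eq_sym => /negbTE ->.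
Qed.

Lemma convEt_vee_bound (R : realType) n (t : R) (F : {fset Zn n}) :
  (0 < n)%N -> 0 < t -> F != fset0 ->
  exists2 y, convEt t F y & forall l, t ^ (vee F l) / n%:R <= y l.
Proof.
move=> n0 t0 F0; have [p [pF pv]] := vee_witness F0.
have n_gt0 : (0 : R) < n%:R by rewrite ltr0n.
(* the barycentre of the points [p i] *)
pose mu c := (n%:R)^-1 * \sum_i ((p i == c)%:R : R).
have mu0 c : 0 <= mu c by rewrite mulr_ge0 ?invr_ge0 ?ler0n ?sumr_ge0.
pose y : Rn R n := [ffun l => \sum_(c <- enum_fset F) mu c * Et t c l].
exists y.
  exists mu; split=> //; split=> [|l]; last by rewrite ffunE.
  rewrite -mulr_sumr exchange_big /=.
  under eq_bigr => i _ do rewrite (sum_seq_indicator _ (fset_uniq F) (pF i)).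
  by rewrite sumr_const card_ord mulVf ?gt_eqF // mulr1n.
move=> l; apply: le_trans (_ : mu (p l) * Et t (p l) l <= _).
  rewrite -pv /Et ffunE mulrC; apply: ler_wpM2r; first by rewrite exprz_ge0 ?ltW.
  rewrite -[X in X <= _]mulr1 ler_pM2l ?invr_gt0 //.
  by rewrite (bigD1 l) //= eqxx lerDl sumr_ge0.
rewrite [X in _ <= X]ffunE (bigD1_seq (p l)) ?fset_uniq //= lerDl big_seq_cond.
by apply: sumr_ge0 => c _; rewrite mulr_ge0 // /Et ffunE exprz_ge0 ?ltW.
Qed.

Lemma exprz_lt_div (R : realFieldType) (t N : R) (b e : int) :
  1 <= N -> N < t -> b < e -> t ^ b < t ^ e / N.
Proof.
move=> N1 Nt be; have t1 : 1 < t by apply: le_lt_trans Nt.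
have t0 : 0 < t by apply: lt_trans t1.
have -> : t ^ e = t ^ (e - 1) * t by rewrite -[in LHS](subrK 1 e) expfzDr ?gt_eqF // expr1z.
apply: le_lt_trans (_ : t ^ (e - 1) < _); first by apply: ler_weXz2l; [exact: ltW | lia].
rewrite -mulrA ltr_pMr ?exprz_gt0 // ltr_pdivlMr ?mul1r //; lra.
Qed.

Lemma hull_no_below (R : realType) n (t : R) (A : Zn n -> Prop) (F : {fset Zn n}) :
  (0 < n)%N -> n%:R < t -> in_hull t A F -> forall b, A b -> ~ llZ b (vee F).
Proof.
move=> n0 tn [F0 [FA face]] b Ab bll.
have n1 : (1 : R) <= n%:R by rewrite ler1n.
have t0 : 0 < t by lra.
have [y Fy y_ge] := convEt_vee_bound n0 t0 F0.
have Eb_lt l : Et t b l < y l.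
  by rewrite /Et ffunE; apply: lt_le_trans (y_ge l); apply: exprz_lt_div.
pose i0 : 'I_n := Ordinal n0.
have := face_bounded_eq face (fun x => convEt_le_sum i0 t0) (@Pt_upclosed R n t A) Fy
  (Pt_Et t Ab) (fun l => ltW (Eb_lt l)).
by move/eqP; rewrite lt_eqF.
Qed.

Section GenericJoin.
Variables (n : nat) (A : Zn n -> Prop) (F : {fset Zn n}).
Hypotheses (A_gen : generic A) (F0 : F != fset0) (FA : forall a, a \in F -> A a)
  (none_below : forall b, A b -> ~ llZ b (vee F)).

Lemma exists_touch b : A b -> leZ b (vee F) -> exists i, b i = vee F i.
Proof.
move=> Ab b_le; have [/existsP [i /eqP]|/existsPn no_touch] := boolP [exists i, b i == vee F i].
  by exists i.
by case: (none_below Ab) => i; rewrite lt_neqAle no_touch b_le.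
Qed.

Lemma touch_uniq b b' i : A b -> A b' -> leZ b (vee F) -> leZ b' (vee F) ->
  b i = vee F i -> b' i = vee F i -> b = b'.
Proof.
move=> Ab Ab' b_le b'_le bi b'i.
have face_i c : leZ c (vee F) -> c i = vee F i -> Tface (vee F) [set i] c.
  by move=> c_le ci; split=> // j /set1P ->.
apply: (A_gen _ (X := [set i])) => //; last exact: face_i.
- by move=> c c_ll Ac; exact: none_below Ac c_ll.
- by apply/set0Pn; exists i; rewrite set11.
- exact: face_i.
Qed.

Lemma vee_inj (B : {fset Zn n}) : B != fset0 -> (forall b, b \in B -> A b) ->
  vee B = vee F -> B = F.
Proof.
have incl (B1 B2 : {fset Zn n}) : B2 != fset0 -> (forall b, b \in B1 -> A b) ->
    (forall b, b \in B2 -> A b) -> vee B1 = vee F -> vee B2 = vee F -> (B1 `<=` B2)%fset.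
  move=> B2_0 B1A B2A e1 e2; apply/fsubsetP => x xB1.
  have x_le : leZ x (vee F) by rewrite -e1; exact: vee_ge.
  have [i xi] := exists_touch (B1A _ xB1) x_le.
  have [c cB2 ci] := vee_attained i B2_0; rewrite e2 in ci.
  suff -> : x = c by [].
  by apply: (touch_uniq (i := i)) => //; [exact: B1A | exact: B2A | rewrite -e2; exact: vee_ge].
by move=> B0 BA eB; apply/eqP; rewrite eqEfsubset !incl.
Qed.
End GenericJoin.

Lemma hull_scarf (R : realType) n (t : R) (A : Zn n -> Prop) F :
  generic A -> (0 < n)%N -> n%:R < t -> in_hull t A F -> in_scarf A F.
Proof.
move=> A_gen n0 tn hF; have none_below := hull_no_below n0 tn hF.
case: hF => [F0 [FA _]]; split=> //; split=> //.
exact: vee_inj.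
Qed.

Section Scarf.
Variables (n : nat) (A : Zn n -> Prop) (F : {fset Zn n}).
Hypothesis F_scarf : in_scarf A F.

Lemma scarf_le_vee b : A b -> leZ b (vee F) -> b \in F.
Proof.
case: F_scarf => [F0 [FA F_min]] Ab b_le.
have F1_0 : (b |` F)%fset != fset0 by apply/fset0Pn; exists b; rewrite fsetU11.
suff <- : (b |` F)%fset = F by rewrite fsetU11.
apply: F_min => // [c|]; first by rewrite in_fset1U => /orP [/eqP ->|/FA].
apply: vee_unique => // [c|i].
  by rewrite in_fset1U => /orP [/eqP ->|/vee_ge].
by have [c cF ci] := vee_attained i F0; exists c; rewrite ?in_fset1U ?cF ?orbT.
Qed.

Lemma scarf_none_below : (0 < n)%N -> forall b, A b -> ~ llZ b (vee F).
Proof.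
move=> n0 b Ab b_ll; have bF : b \in F by apply: scarf_le_vee => // i; exact: ltW.
case: F_scarf => [F0 [FA F_min]].
have not_b (c : Zn n) i : c i = vee F i -> c != b.
  by move=> ci; apply: contraTneq (b_ll i) => <-; rewrite ci ltxx.
have [c cF ci] := vee_attained (Ordinal n0) F0.
have Fb0 : (F `\ b)%fset != fset0 by apply/fset0Pn; exists c; rewrite in_fsetD1 cF (not_b _ _ ci).
suff Fb : (F `\ b)%fset = F by move: bF; rewrite -Fb in_fsetD1 eqxx.
apply: F_min => // [d|]; first by rewrite in_fsetD1 => /andP [_ /FA].
apply: vee_unique => // [d|i]; first by rewrite in_fsetD1 => /andP [_ /vee_ge].
have [d dF di] := vee_attained i F0.
by exists d; rewrite // in_fsetD1 dF (not_b _ _ di).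
Qed.
End Scarf.

Lemma mulmx_row_diag (R : pzSemiRingType) n (u : 'rV[R]_n) (M : 'M[R]_n) i :
  (u *m M) 0 i = u 0 i * M i i + \sum_(l | l != i) u 0 l * M l i.
Proof. by rewrite mxE (bigD1 i). Qed.

Section DiagonallyDominant.
Variables (R : realFieldType) (n : nat) (t : R) (M : 'M[R]_n).
Hypotheses (t_gt0 : 0 < t) (tn : 2 * n%:R <= t) (M_diag : forall i, 1 <= M i i)
  (M_offdiag : forall l i, l != i -> `|M l i| * t <= 1).

Lemma offdiag_sum_bound (u : 'rV[R]_n) i :
  `|\sum_(l | l != i) u 0 l * M l i| * t <= \sum_l `|u 0 l|.
Proof.
apply: le_trans (_ : (\sum_(l | l != i) `|u 0 l| * `|M l i|) * t <= _).
  apply: ler_wpM2r; first exact: ltW.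
  by apply: le_trans (ler_norm_sum _ _ _) _; apply: ler_sum => l _; rewrite normrM.
rewrite mulr_suml [X in _ <= X](bigID (fun l => l != i)) /= -[X in X <= _]addr0.
apply: lerD; last exact: sumr_ge0.
by apply: ler_sum => l li; rewrite -mulrA; apply: ler_piMr => //; exact: M_offdiag.
Qed.

Lemma diag_dominant_bound (u : 'rV[R]_n) C :
  (forall i, `|(u *m M) 0 i| <= C) -> forall i, `|u 0 i| <= 2 * C.
Proof.
move=> uM_le; set m := \sum_l `|u 0 l|.
have row_bound i : `|u 0 i| * t <= C * t + m.
  have ui : `|u 0 i| <= C + `|\sum_(l | l != i) u 0 l * M l i|.
    apply: le_trans (_ : `|u 0 i * M i i| <= _).
      rewrite normrM; apply: ler_peMr => //.
      by rewrite ger0_norm ?M_diag // (le_trans ler01 (M_diag i)).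
    rewrite -[u 0 i * M i i](addrK (\sum_(l | l != i) u 0 l * M l i)) -mulmx_row_diag.
    by apply: le_trans (ler_normB _ _) _; rewrite lerD2r.
  have := offdiag_sum_bound u i; have := ler_wpM2r (ltW t_gt0) ui.
  rewrite /= mulrDl -/m; lra.
have m_bound : m * t <= n%:R * (C * t + m).
  rewrite /m mulr_suml; apply: le_trans (ler_sum _ (fun i _ => row_bound i)) _.
  by rewrite sumr_const card_ord mulr_natl.
move=> i; have n_gt0 : (0 : R) < n%:R by rewrite ltr0n (leq_ltn_trans (leq0n i)).
have m_ge0 : 0 <= m by exact: sumr_ge0.
have m_le : m <= C * t.
  rewrite -(ler_pM2l n_gt0); have := ler_wpM2l m_ge0 tn; lra.
by rewrite -(ler_pM2r t_gt0); have := row_bound i; lra.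
Qed.

Lemma diag_dominant_unitmx : M \in unitmx.
Proof.
rewrite unitmxE unitfE; apply/negP => /det0P [v /eqP v0 vM]; apply: v0.
have v_le i : `|v 0 i| <= 2 * 0 by apply: diag_dominant_bound => j; rewrite vM mxE normr0.
by apply/rowP => j; rewrite mxE; apply/normr0_eq0/le_anti; rewrite normr_ge0 -(mulr0 2) v_le.
Qed.
End DiagonallyDominant.

Lemma weight_lower_bound (R : realFieldType) (s x r t N : R) :
  1 <= s <= N -> s * x + r = 1 -> `|r| * t <= 2 * N -> 4 * N <= t -> 0 < x /\ 1 < x * t.
Proof.
move=> /andP [s1 sN] e r_le tN.
have t_gt0 : 0 < t by lra.
have s_gt0 : 0 < s by lra.
have r_half : r <= 1 / 2.
  rewrite -(ler_pM2r t_gt0); apply: le_trans (_ : `|r| * t <= _).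
    by apply: ler_wpM2r; [exact: ltW | exact: ler_norm].
  lra.
have sx_half : 1 / 2 <= s * x by lra.
have x_gt0 : 0 < x by rewrite -(pmulr_rgt0 _ s_gt0); lra.
split=> //; rewrite -(ltr_pM2l s_gt0) mulr1; nra.
Qed.

Section Weights.
Variables (R : realType) (n : nat) (t : R) (A : Zn n -> Prop) (F : {fset Zn n}).
Variable p : 'I_n -> Zn n.
Hypotheses (A_gen : generic A) (n_gt0 : (0 < n)%N) (F_scarf : in_scarf A F)
  (tn : 4 * n%:R <= t) (pF : forall i, p i \in F) (p_vee : forall i, p i i = vee F i).

Implicit Types (a b : Zn n).
Local Notation eta := (vee F).

Let FA a : a \in F -> A a. Proof. by case: F_scarf => _ [FA _]; exact: FA. Qed.
Let none_below := scarf_none_below F_scarf n_gt0.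
Let n1 : (1 : R) <= n%:R. Proof. by rewrite ler1n. Qed.
Let t1 : 1 <= t. Proof. by move: n1 tn; lra. Qed.
Let t_gt0 : 0 < t. Proof. exact: lt_le_trans ltr01 t1. Qed.

Let p_touch i l : p i l = eta l -> p l = p i.
Proof.
move=> pil; apply: (touch_uniq A_gen none_below (i := l)); rewrite ?p_vee //;
  by [apply: FA | apply: vee_ge].
Qed.

Let F_p a : a \in F -> exists i, a = p i.
Proof.
move=> aF; have [i ai] := exists_touch none_below (FA aF) (vee_ge aF).
exists i; apply: (touch_uniq A_gen none_below (i := i)); rewrite ?p_vee //;
  by [apply: FA | apply: vee_ge].
Qed.

Let rel_pow (a : Zn n) l : R := t ^ (a l - eta l).
Let ntouch (a : Zn n) : R := \sum_(l | a l == eta l) 1.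

(* Column i is the equation [\sum_l lam_l t^(p i l - eta l) = 1] for [p i], except that
   every [lam_l] with [p i l = eta l] is replaced by [lam_i]: such [l] have [p l = p i]
   by genericity, so the solution has these entries equal anyway ([lam_touch]). *)
Let N : 'M[R]_n := \matrix_(l, i)
  if l == i then ntouch (p i) else if p i l == eta l then 0 else rel_pow (p i) l.

Let ntouch_ge1 i : 1 <= ntouch (p i).
Proof. by rewrite /ntouch (bigD1 i) ?p_vee ?eqxx //= lerDl sumr_ge0. Qed.

Let ntouch_le a : ntouch a <= n%:R.
Proof.
rewrite /ntouch big_mkcond; apply: le_trans (_ : \sum_(l < n) (1 : R) <= _).
  by apply: ler_sum => l _; case: ifP.
by rewrite sumr_const card_ord.
Qed.

Let rel_pow_lt a l : a l < eta l -> 0 <= rel_pow a l /\ rel_pow a l * t <= 1.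
Proof.
move=> al; split; first by rewrite exprz_ge0 ?ltW.
rewrite /rel_pow -[X in _ * X]expr1z -expfzDr ?gt_eqF // -(expr0z t).
by apply: ler_weXz2l => //; lia.
Qed.

Let N_offdiag l i : l != i -> `|N l i| * t <= 1.
Proof.
rewrite mxE => /negbTE ->; case: eqP => [_|pil]; first by rewrite normr0 mul0r ler01.
have pil_lt : p i l < eta l by rewrite lt_neqAle vee_ge ?pF // andbT; apply/eqP.
by have [r0 rt] := rel_pow_lt pil_lt; rewrite ger0_norm.
Qed.

Let lam : 'rV[R]_n := const_mx 1 *m invmx N.
Let off (a : Zn n) := \sum_(l | a l != eta l) lam 0 l * rel_pow a l.

Let N_unit : N \in unitmx.
Proof.
apply: (diag_dominant_unitmx t_gt0) N_offdiag; first by move: n1 tn; lra.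
by move=> i; rewrite mxE eqxx.
Qed.

Let off_N i : \sum_(l | l != i) lam 0 l * N l i = off (p i).
Proof.
rewrite /off big_mkcond [RHS]big_mkcond /=; apply: eq_bigr => l _; rewrite [N l i]mxE.
by case: (eqVneq l i) => [->|li] /=; rewrite ?p_vee ?eqxx //; case: eqP; rewrite ?mulr0.
Qed.

Let lamN : lam *m N = const_mx 1. Proof. exact: (mulmxKV N_unit). Qed.

Let lam_row i : ntouch (p i) * lam 0 i + off (p i) = 1.
Proof.
have := congr1 (fun v : 'rV[R]_n => v 0 i) lamN.
by rewrite /= mulmx_row_diag [N i i]mxE [const_mx 1 0 i]mxE eqxx mulrC off_N.
Qed.

Let tn2 : 2 * n%:R <= t. Proof. by move: n1 tn; lra. Qed.
Let N_diag i : 1 <= N i i. Proof. by rewrite mxE eqxx. Qed.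

Let lam_le2 l : `|lam 0 l| <= 2.
Proof.
rewrite -[2]mulr1; apply: (diag_dominant_bound t_gt0 tn2 N_diag N_offdiag) => i.
by rewrite lamN mxE normr1.
Qed.

Let off_bound i : `|off (p i)| * t <= 2 * n%:R.
Proof.
rewrite -off_N; apply: le_trans (offdiag_sum_bound t_gt0 N_offdiag lam i) _.
apply: le_trans (_ : \sum_(l < n) (2 : R) <= _); first exact: ler_sum.
by rewrite sumr_const card_ord mulr_natr.
Qed.

Let lam_pos i : 0 < lam 0 i /\ 1 < lam 0 i * t.
Proof.
apply: (weight_lower_bound _ (lam_row i) (off_bound i) tn).
by rewrite ntouch_ge1 ntouch_le.
Qed.

Let lam_touch i l : p i l = eta l -> lam 0 l = lam 0 i.
Proof.
move=> pil; have := lam_row l; rewrite (p_touch pil) -(lam_row i) => /addIr.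
by apply: mulfI; rewrite gt_eqF // (lt_le_trans ltr01 (ntouch_ge1 i)).
Qed.

Let w l : R := lam 0 l * t ^ (- eta l).

Let w_gt0 l : 0 < w l.
Proof. by rewrite mulr_gt0 ?exprz_gt0 //; case: (lam_pos l). Qed.

Let lin_Et a : \sum_l w l * Et t a l = \sum_l lam 0 l * rel_pow a l.
Proof. by apply: eq_bigr => l _; rewrite /Et ffunE /w /rel_pow expfzDr ?gt_eqF //; ring. Qed.

Let w_F a : a \in F -> \sum_l w l * Et t a l = 1.
Proof.
move=> /F_p [i ->]; rewrite lin_Et (bigID (fun l => p i l == eta l)) /= -[RHS](lam_row i).
congr (_ + _); rewrite /ntouch mulr_suml; apply: eq_bigr => l /eqP pil.
by rewrite /rel_pow pil subrr expr0z mulr1 mul1r (lam_touch pil).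
Qed.

Let w_notF b : A b -> b \notin F -> 1 < \sum_l w l * Et t b l.
Proof.
move=> Ab bF; rewrite lin_Et.
have [j bj] : exists j, eta j < b j.
  have [/existsP //|/existsPn b_le] := boolP [exists j, eta j < b j].
  by case/negP: bF; apply: (scarf_le_vee F_scarf Ab) => j; rewrite leNgt b_le.
have [lam_j_gt0 lam_j_t] := lam_pos j.
apply: lt_le_trans lam_j_t _; rewrite (bigD1 j) //= -[X in X <= _]addr0; apply: lerD.
  rewrite ler_pM2l // /rel_pow -[X in X <= _]expr1z.
  by apply: ler_weXz2l => //; lia.
apply: sumr_ge0 => l _; rewrite mulr_ge0 ?exprz_ge0 ?(ltW t_gt0) //.
by case: (lam_pos l) => /ltW.
Qed.

Lemma scarf_hull_witness : in_hull t A F.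
Proof. by split; [case: F_scarf | split=> //; exact: exposed_face w_gt0 FA w_F w_notF]. Qed.
End Weights.

Lemma scarf_hull (R : realType) n (t : R) (A : Zn n -> Prop) F :
  generic A -> (0 < n)%N -> 4 * n%:R <= t -> in_scarf A F -> in_hull t A F.
Proof.
move=> A_gen n_gt0 tn F_scarf; have F0 : F != fset0 by case: F_scarf.
have [p [pF p_vee]] := vee_witness F0.
exact: scarf_hull_witness A_gen n_gt0 F_scarf tn pF p_vee.
Qed.

Lemma scarf_hull_dim0 (R : realType) n (t : R) (A : Zn n -> Prop) F :
  n = 0%N -> in_scarf A F <-> in_hull t A F.
Proof.
move=> n0; subst n.
have Zn0_eq (a b : Zn 0) : a = b by apply/ffunP => -[].
split=> -[F0 [FA _]]; do 2!split=> //.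
- have convF (x y : Rn R 0) : convEt t F x -> convEt t F y.
    by have -> : x = y by apply/ffunP => -[].
  split; first by move=> x; apply: convEt_Pt.
  by split=> [x y s Fx _ _ | x y s _ _ _ Fz]; [apply: convF Fx | split; apply: convF Fz].
- move=> B /fset0Pn [b bB] _ _; case/fset0Pn: F0 => a aF.
  by apply/fsetP => x; rewrite (Zn0_eq x a) aF (Zn0_eq a b) bB.
Qed.

Theorem mainTheorem3 (R : realType) (n : nat) (L A : Zn n -> Prop) :
  antichain_lattice L -> Lambda_finite L A -> generic A ->
  exists t0 : R, 1 < t0 /\
    forall t : R, t0 <= t ->
      forall F : {fset Zn n}, in_scarf A F <-> in_hull t A F.
Proof.
move=> _ _ A_gen; have n_ge0 : (0 : R) <= n%:R by exact: ler0n.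
exists (4 * n%:R + 2); split=> [|t tn F]; first lra.
have [n0|n_gt0] := posnP n; first exact: scarf_hull_dim0.
have n1 : (1 : R) <= n%:R by rewrite ler1n.
by split; [apply: scarf_hull | apply: hull_scarf] => //; lra.
Qed.
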